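(* Consider the admission control model described in the context, with discount rate $\alpha>0$, and suppose: (i) $0\le \Delta d_{i+1}\le \Delta d_i$ for $1\le i\le n-1$, and $\Delta d_1>0$; (ii) $\Delta h_{i+1}\ge \Delta h_i\ge 0$ for $1\le i\le n-1$. Define $\nu_0,\dots,\nu_{n-1}$ recursively by $$\nu_0=\frac{\Delta h_1}{\alpha+\Delta d_1},\qquad \nu_j=\nu_{j-1}+\frac{\Delta h_{j+1}-\nu_{j-1}(\alpha+\Delta d_{j+1})}{\alpha+\Delta d_{j+1}+w^{S_{j+1}}_{j-1}/\rho_{j-1}},\quad 1\le j\le n-1.$$ Then the model is PCL-indexable relative to threshold policies and the rejection measure, in the following sense: (a) $w^S_i>0$ for every $S\in\mathcal F$ and $0\le i\le n-1$, and $\nu_0\le\nu_1\le\cdots\le\nu_{n-1}$; (b) the $\nu$-charge problem is indexable relative to threshold policies with dynamic allocation indices $\nu_j$: for every $\nu\in\mathbb R$, the set of states $j\in\{0,\dots,n-1\}$ at which shutting the gate is optimal in the $\nu$-charge problem equals $\{j: \nu\le \nu_j\}$ (which belongs to $\mathcal F$ and decreases from $\{0,\dots,n-1\}$ to $\emptyset$ as $\nu$ increases from $-\infty$ to $+\infty$); (c) for every $j\in\{0,\dots,n-1\}$, $$\nu_j=\max\left\{\frac{v^{S\setminus\{j\}}_j-v^S_j}{b^S_j-b^{S\setminus\{j\}}_j}:\ j\in S\in\{S_1,\dots,S_n\}\right\}.$$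
   Context: Admission control model: a single-server queue with finite buffer, whose number in system $L(t)\in N=\{0,1,\dots,n\}$ ($n\ge1$) evolves in continuous time. In state $i$ customers arrive as a Poisson stream of rate $\lambda_i>0$ and the server completes services at rate $\mu_i>0$ ($1\le i\le n$), with $\mu_0=0$. A gatekeeper chooses at each time an action $a(t)\in\{0,1\}$: $a=1$ (shut the entry gate; arriving customers are rejected) or $a=0$ (open; arriving customers are admitted). In state $n$ the gate is always shut. Policies are stationary (possibly randomized) functions of the state. Holding costs accrue at rate $h_i$ in state $i$, and are discounted at rate $\alpha>0$. For a policy $u$ and initial state $i$: $v^u_i=E^u_i[\int_0^\infty h_{L(t)}e^{-\alpha t}dt]$ and $b^u_i=E^u_i[\int_0^\infty \lambda_{L(t)}a(t)e^{-\alpha t}dt]$ (expected discounted number of rejections). The $\nu$-charge problem is to minimize $v^u_i+\nu b^u_i$ over stationary policies. For $S\subseteq\{0,\dots,n-1\}$, the $S$-active policy shuts the gate exactly in states $S\cup\{n\}$; write $v^S_i,b^S_i$ for its measures. Marginal workloads: $w^S_i=\lambda_i\,[1-(b^S_{i+1}-b^S_i)]$ for $0\le i\le n-1$. Threshold sets: $S_k=\{k-1,\dots,n-1\}$ for $1\le k\le n$, $S_{n+1}=\emptyset$, and $\mathcal F=\{S_1,\dots,S_{n+1}\}$. Notation: $\Delta x_i=x_i-x_{i-1}$; $d_i=\mu_i-\lambda_i$ (so $d_0=-\lambda_0$); $\rho_i=\lambda_i/\mu_{i+1}$. *)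

From mathcomp Require Import all_boot all_order all_algebra.
Set Implicit Arguments. Unset Strict Implicit. Unset Printing Implicit Defensive.
Import Order.TTheory GRing.Theory Num.Theory.
Local Open Scope ring_scope.

(* States are 0..n.  Rates and costs are functions nat -> R, only their values
   on the relevant states matter.  mu_0 = 0 by convention (mu0 below). *)

Definition mu0 (R : realFieldType) (mu : nat -> R) (i : nat) : R :=
  if i == 0%N then 0 else mu i.

(* A stationary randomized policy u: u i = probability of shutting the gate
   in state i (0 <= u i <= 1 for i < n); in state n the gate is always shut. *)
Definition policy (R : realFieldType) (n : nat) (u : nat -> R) : Prop :=
  forall i, (i < n)%N -> 0 <= u i <= 1.

Definition shut (R : realFieldType) (n : nat) (u : nat -> R) (i : nat) : R :=
  if (n <= i)%N then 1 else u i.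

Definition gen (R : realFieldType) (n : nat) (lam mu : nat -> R) (u : nat -> R)
  : 'M[R]_n.+1 :=
  \matrix_(i, j)
    (if (j : nat) == (i : nat).+1 then lam i * (1 - shut n u i)
     else if (j : nat).+1 == (i : nat) then mu0 mu i
     else if (i : nat) == (j : nat) then - (lam i * (1 - shut n u i) + mu0 mu i)
     else 0).

(* Expected total alpha-discounted reward  E_i[ int_0^oo f(L(t)) e^{-alpha t} dt ]
   of a finite-state CTMC with generator Q, computed by the resolvent
   (alpha I - Q)^{-1} f. *)
Definition disc_measure (R : realFieldType) (n : nat) (lam mu : nat -> R)
  (alpha : R) (u : nat -> R) (f : nat -> R) (i : nat) : R :=
  (invmx (alpha%:M - gen n lam mu u) *m \col_(k < n.+1) f k) (inord i) 0.

Definition vm (R : realFieldType) (n : nat) (lam mu h : nat -> R) (alpha : R)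
  (u : nat -> R) (i : nat) : R :=
  disc_measure n lam mu alpha u h i.

Definition bm (R : realFieldType) (n : nat) (lam mu : nat -> R) (alpha : R)
  (u : nat -> R) (i : nat) : R :=
  disc_measure n lam mu alpha u (fun k => lam k * shut n u k) i.

Definition Sactive (R : realFieldType) (S : pred nat) : nat -> R :=
  fun i => if S i then 1 else 0.

Definition vS (R : realFieldType) (n : nat) (lam mu h : nat -> R) (alpha : R)
  (S : pred nat) (i : nat) : R := vm n lam mu h alpha (Sactive R S) i.

Definition bS (R : realFieldType) (n : nat) (lam mu : nat -> R) (alpha : R)
  (S : pred nat) (i : nat) : R := bm n lam mu alpha (Sactive R S) i.

Definition wS (R : realFieldType) (n : nat) (lam mu : nat -> R) (alpha : R)
  (S : pred nat) (i : nat) : R :=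
  lam i * (1 - (bS n lam mu alpha S i.+1 - bS n lam mu alpha S i)).

Definition Sk (n k : nat) : pred nat := fun i => (k.-1 <= i)%N && (i < n)%N.

Definition setD1n (S : pred nat) (j : nat) : pred nat := fun i => S i && (i != j).

Definition dd (R : realFieldType) (lam mu : nat -> R) (i : nat) : R :=
  mu0 mu i - lam i.
Definition Dd (R : realFieldType) (lam mu : nat -> R) (i : nat) : R :=
  dd lam mu i - dd lam mu i.-1.
Definition Dh (R : realFieldType) (h : nat -> R) (i : nat) : R := h i - h i.-1.
Definition rho (R : realFieldType) (lam mu : nat -> R) (i : nat) : R :=
  lam i / mu i.+1.

Fixpoint nuidx (R : realFieldType) (n : nat) (lam mu h : nat -> R) (alpha : R)
  (j : nat) : R :=
  match j with
  | 0 => Dh h 1 / (alpha + Dd lam mu 1)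
  | j'.+1 =>
      let p := nuidx n lam mu h alpha j' in
      p + (Dh h j'.+2 - p * (alpha + Dd lam mu j'.+2))
          / (alpha + Dd lam mu j'.+2 + wS n lam mu alpha (Sk n j'.+2) j' / rho lam mu j')
  end.

Definition charge_obj (R : realFieldType) (n : nat) (lam mu h : nat -> R) (alpha : R)
  (nu : R) (u : nat -> R) (i : nat) : R :=
  vm n lam mu h alpha u i + nu * bm n lam mu alpha u i.

Definition charge_optimal (R : realFieldType) (n : nat) (lam mu h : nat -> R)
  (alpha : R) (nu : R) (u : nat -> R) : Prop :=
  policy n u /\
  forall u', policy n u' -> forall i, (i <= n)%N ->
    charge_obj n lam mu h alpha nu u i <= charge_obj n lam mu h alpha nu u' i.

Definition shut_optimal (R : realFieldType) (n : nat) (lam mu h : nat -> R)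
  (alpha : R) (nu : R) (j : nat) : Prop :=
  exists u, charge_optimal n lam mu h alpha nu u /\ u j = 1.

(* Under the threshold policy that admits exactly below state m, the increments
   D_i = Delta v_i + nu Delta b_i - nu of the nu-charge objective solve a tridiagonal
   system.  Forward elimination below m and forward recursion above m show that D is
   negative on (0, m] and nonnegative on (m, n] exactly when nu_(m-1) < nu <= nu_m,
   the index nu_j being the value of nu that makes the eliminated right-hand side
   vanish at j+1; conditions (i) and (ii) propagate the signs and make the nu_j
   nondecreasing.  A discrete minimum principle for alpha I - Q^u turns this sign
   pattern into optimality of the threshold policy among all stationary policies, and
   identifies nu_j with the largest marginal productivity rate at j. *)

From mathcomp Require Import all_boot all_order all_algebra.
From mathcomp Require Import ring lra zify.
Set Implicit Arguments. Unset Strict Implicit. Unset Printing Implicit Defensive.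
Import Order.TTheory GRing.Theory Num.Theory.
Local Open Scope ring_scope.

Lemma unitmx_of_ker0 (F : fieldType) (N : nat) (A : 'M[F]_N) :
  (forall x : 'cV_N, A *m x = 0 -> x = 0) -> A \in unitmx.
Proof.
move=> ker0; rewrite -unitmx_tr -row_free_unit; apply: inj_row_free => v vA0.
apply: trmx_inj; rewrite trmx0; apply: ker0.
by rewrite -{1}[A]trmxK -trmx_mul vA0 trmx0.
Qed.

Section AdmissionControl.
Variables (R : realFieldType) (n : nat) (lam mu h : nat -> R) (alpha : R).

Definition adm (u : nat -> R) i := lam i * (1 - shut n u i).

Definition resop u (x : nat -> R) i :=
  (alpha + adm u i + mu0 mu i) * x i - adm u i * x i.+1 - mu0 mu i * x i.-1.

Lemma adm_n u : adm u n = 0.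
Proof. by rewrite /adm /shut leqnn subrr mulr0. Qed.

Lemma resop_mxE u (X : 'cV[R]_n.+1) (i : 'I_n.+1) :
  ((alpha%:M - gen n lam mu u) *m X) i 0 = resop u (fun k => X (inord k) 0) i.
Proof.
pose c k (j : 'I_n.+1) : R := if (j : nat) == k then X j 0 else 0.
have rowE j : (alpha%:M - gen n lam mu u) i j * X j 0 =
    (alpha + adm u i + mu0 mu i) * c i j - adm u i * c i.+1 j - mu0 mu i * c i.-1 j.
  rewrite !mxE /c -(inj_eq val_inj) /= -/(adm u i).
  have [/val_inj <-|nij] := eqVneq (i : nat) j.
    rewrite mulr1n ltn_eqF // gtn_eqF //.
    case: eqP => [ei|_]; last by ring.
    have -> : mu0 mu i = 0 by rewrite /mu0; case: (nat_of_ord i) ei => // k; lia.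
    by ring.
  have -> : (j.+1 == i :> nat) = (j == i.-1 :> nat) by apply/eqP/eqP; move: nij => /eqP; lia.
  rewrite mulr0n; case: eqP => [ji|_]; last by case: eqP => _; ring.
  have -> : (j == i.-1 :> nat) = false by apply/eqP; lia.
  by ring.
have sum_c k : \sum_j c k j = if (k < n.+1)%N then X (inord k) 0 else 0.
  rewrite -big_mkcond /= (eq_bigr (fun j : 'I_n.+1 => X (inord j) 0)) => [|j _].
    exact: (big_ord1_eq _ (fun j => X (inord j) 0)).
  by rewrite inord_val.
rewrite mxE (eq_bigr _ (fun j _ => rowE j)) !sumrB -!mulr_sumr !sum_c /resop.
rewrite ltn_ord (leq_ltn_trans (leq_pred i) (ltn_ord i)) ltnS.
case: ltnP => [//|ni]; have -> : (i : nat) = n by have := ltn_ord i; lia.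
by rewrite adm_n !mul0r.
Qed.

Lemma resopDZ u (c : R) x y i :
  resop u (fun k => x k + c * y k) i = resop u x i + c * resop u y i.
Proof. by rewrite /resop; ring. Qed.

Lemma resopN u x i : resop u (fun k => - x k) i = - resop u x i.
Proof. by rewrite /resop; ring. Qed.

Lemma resopB u x y i : resop u (fun k => x k - y k) i = resop u x i - resop u y i.
Proof. by rewrite /resop; ring. Qed.

Lemma policy_Sactive S : policy n (Sactive R S).
Proof. by move=> i _; rewrite /Sactive; case: (S i); rewrite ?lexx ?ler01. Qed.

(* [thr m] admits exactly in the states below [m]: it is the [S_(m+1)]-active policy. *)
Definition thr m := Sactive R (Sk n m.+1).

Lemma adm_thr_lt m : (m <= n)%N -> forall i, (i < m)%N -> adm (thr m) i = lam i.
Proof.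
move=> mn i im; have iN : (i < n)%N by lia.
by rewrite /adm /shut leqNgt iN /thr /Sactive /Sk /= leqNgt im subr0 mulr1.
Qed.

Lemma adm_thr_ge m i : (m <= i <= n)%N -> adm (thr m) i = 0.
Proof.
case/andP=> mi iN; case: (ltnP i n) => [lt_in|ge_in]; last by rewrite (_ : i = n) ?adm_n //; lia.
by rewrite /adm /shut leqNgt lt_in /thr /Sactive /Sk /= mi lt_in subrr mulr0.
Qed.

Hypothesis alpha_gt0 : 0 < alpha.
Hypothesis lam_gt0 : forall i, (i <= n)%N -> 0 < lam i.
Hypothesis mu_gt0 : forall i, (1 <= i <= n)%N -> 0 < mu i.

Lemma adm_ge0 u i : policy n u -> (i <= n)%N -> 0 <= adm u i.
Proof.
move=> Pu Hi; rewrite /adm /shut; case: leqP => Hn; first by rewrite subrr mulr0.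
have /andP [_ u1] := Pu i Hn; have := lam_gt0 Hi; nra.
Qed.

Lemma adm_le_lam u i : policy n u -> (i <= n)%N -> adm u i <= lam i.
Proof.
move=> Pu Hi; have := lam_gt0 Hi; rewrite /adm /shut.
case: leqP => Hn; first by rewrite subrr mulr0 => /ltW.
have /andP [u0 _] := Pu i Hn; nra.
Qed.

Lemma mu0_ge0 i : (i <= n)%N -> 0 <= mu0 mu i.
Proof.
rewrite /mu0; case: eqP => // i0 Hi.
by apply/ltW/mu_gt0; apply/andP; split => //; lia.
Qed.

Lemma resop_ge0 u y : policy n u ->
  (forall i, (i <= n)%N -> 0 <= resop u y i) -> forall i, (i <= n)%N -> 0 <= y i.
Proof.
move=> Pu Hy.
case: (arg_minP (fun i : 'I_n.+1 => y i) (isT : xpredT ord0)) => i0 _ ymin.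
suff y0 : 0 <= y i0.
  by move=> i Hi; apply: le_trans y0 (ymin (Ordinal (Hi : (i < n.+1)%N)) isT).
have Hi0 : (i0 <= n)%N by rewrite -ltnS.
rewrite leNgt; apply/negP => yneg; move: (Hy i0 Hi0); rewrite /resop.
have up_le : adm u i0 * (y i0 - y i0.+1) <= 0.
  case: (ltnP i0 n) => [lt_i0n|ge_i0n].
    have := ymin (Ordinal (lt_i0n : (i0.+1 < n.+1)%N)) isT => /=.
    have := adm_ge0 Pu Hi0; nra.
  have -> : nat_of_ord i0 = n by lia.
  by rewrite adm_n mul0r.
have dn_le : mu0 mu i0 * (y i0 - y i0.-1) <= 0.
  have := ymin (Ordinal (leq_ltn_trans (leq_pred i0) (ltn_ord i0))) isT.
  have := mu0_ge0 Hi0; rewrite /=; nra.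
have : alpha * y i0 < 0 by rewrite pmulr_rlt0.
lra.
Qed.

Lemma resop_eq0 u y : policy n u ->
  (forall i, (i <= n)%N -> resop u y i = 0) -> forall i, (i <= n)%N -> y i = 0.
Proof.
move=> Pu Hy i Hi; apply/eqP; rewrite eq_le; apply/andP; split; last first.
  by apply: (resop_ge0 Pu) => // k Hk; rewrite Hy.
rewrite -oppr_ge0; move: i Hi; apply: (resop_ge0 (y := fun k => - y k) Pu) => i Hi.
by rewrite resopN Hy // oppr0.
Qed.

Lemma resolvent_unitmx u : policy n u -> alpha%:M - gen n lam mu u \in unitmx.
Proof.
move=> Pu; apply: unitmx_of_ker0 => X HX; apply/matrixP => i j.
rewrite (ord1 j) mxE -(inord_val i).
apply: (resop_eq0 (y := fun k => X (inord k) 0) Pu); last by rewrite -ltnS.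
by move=> k Hk; rewrite -(@inordK n k) // -resop_mxE HX mxE.
Qed.

Lemma resop_disc_measure u f i : policy n u -> (i <= n)%N ->
  resop u (disc_measure n lam mu alpha u f) i = f i.
Proof.
move=> Pu Hi; set A := alpha%:M - gen n lam mu u.
have : A *m (invmx A *m \col_(k < n.+1) f k) = \col_(k < n.+1) f k.
  by rewrite mulmxA mulmxV ?mul1mx // resolvent_unitmx.
by move/matrixP/(_ (inord i) 0); rewrite resop_mxE mxE inordK.
Qed.

Lemma resop_point_source u y j c : policy n u -> (j <= n)%N -> c < 0 ->
  (forall i, (i <= n)%N -> resop u y i = if i == j then c else 0) -> y j < 0.
Proof.
move=> Pu Hj c_lt0 Hy.
have y_le0 i : (i <= n)%N -> y i <= 0.
  rewrite -oppr_ge0; move: i; apply: (resop_ge0 (y := fun k => - y k) Pu) => i Hi.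
  by rewrite resopN Hy //; case: eqP; rewrite ?oppr_ge0 // => _; apply: ltW.
have := Hy j Hj; rewrite eqxx /resop => Hc.
have : 0 < alpha + adm u j + mu0 mu j.
  by have := adm_ge0 Pu Hj; have := mu0_ge0 Hj; have := alpha_gt0; lra.
have a_y : adm u j * y j.+1 <= 0.
  case: (ltnP j n) => [lt_jn|ge_jn]; last by rewrite (_ : j = n) ?adm_n ?mul0r //; lia.
  exact: mulr_ge0_le0 (adm_ge0 Pu Hj) (y_le0 _ lt_jn).
have d_y : mu0 mu j * y j.-1 <= 0.
  by apply: mulr_ge0_le0 (mu0_ge0 Hj) (y_le0 _ _); lia.
by move=> pos; rewrite -(pmulr_rlt0 _ pos); lra.
Qed.

Definition diff_sys (a s D : nat -> R) := forall k, (k < n)%N ->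
  (alpha + a k + mu0 mu k.+1) * D k.+1 - a k.+1 * D k.+2 - mu0 mu k * D k = s k.+1.

Lemma diff_sys_resop u x f c : (forall i, (i <= n)%N -> resop u x i = f i) ->
  diff_sys (adm u)
    (fun i => f i - f i.-1 - c * (alpha + adm u i.-1 + mu0 mu i - adm u i - mu0 mu i.-1))
    (fun i => x i - x i.-1 - c).
Proof. by move=> Hx k Hk; rewrite /= -(Hx k.+1 Hk) -(Hx k (ltnW Hk)) /resop; ring. Qed.

Definition dv m i := vS n lam mu h alpha (Sk n m.+1) i - vS n lam mu h alpha (Sk n m.+1) i.-1.
Definition db m i := bS n lam mu alpha (Sk n m.+1) i - bS n lam mu alpha (Sk n m.+1) i.-1 - 1.
Definition dC m v i := dv m i + v * db m i.
Definition gam i := alpha + Dd lam mu i.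
Definition forcing v i := Dh h i - v * gam i.

Lemma resop_vS S i : (i <= n)%N ->
  resop (Sactive R S) (vS n lam mu h alpha S) i = h i.
Proof. exact/resop_disc_measure/policy_Sactive. Qed.

Lemma resop_bS S i : (i <= n)%N ->
  resop (Sactive R S) (bS n lam mu alpha S) i = lam i * shut n (Sactive R S) i.
Proof. exact/resop_disc_measure/policy_Sactive. Qed.

Lemma resop_vS_gap S S' i : (i <= n)%N ->
  resop (Sactive R S) (fun k => vS n lam mu h alpha S k - vS n lam mu h alpha S' k) i
  = (adm (Sactive R S) i - adm (Sactive R S') i)
    * (vS n lam mu h alpha S' i.+1 - vS n lam mu h alpha S' i).
Proof. by move=> Hi; have := resop_vS S Hi; have := resop_vS S' Hi; rewrite resopB /resop; lra. Qed.

Lemma resop_bS_gap S S' i : (i <= n)%N ->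
  resop (Sactive R S) (fun k => bS n lam mu alpha S k - bS n lam mu alpha S' k) i
  = (adm (Sactive R S) i - adm (Sactive R S') i)
    * (bS n lam mu alpha S' i.+1 - bS n lam mu alpha S' i - 1).
Proof.
by move=> Hi; have := resop_bS S Hi; have := resop_bS S' Hi; rewrite resopB /resop /adm; lra.
Qed.

Lemma adm_setD1n m j i : (m <= j < n)%N -> (i <= n)%N ->
  adm (Sactive R (setD1n (Sk n m.+1) j)) i - adm (Sactive R (Sk n m.+1)) i
  = if i == j then lam j else 0.
Proof.
case/andP=> mj jn Hi; case: (ltnP i n) => [iN|ni]; last first.
  by rewrite (_ : i = n) ?adm_n ?subrr //; [case: eqP => //; lia | lia].
rewrite /adm /shut leqNgt iN /Sactive /setD1n /Sk /=.
by case: eqP => [->|/eqP nij]; rewrite ?eqxx ?mj ?jn ?nij ?andbT /=; ring.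
Qed.

Lemma diff_sys_dv m : diff_sys (adm (thr m)) (Dh h) (dv m).
Proof.
move=> k Hk; have := diff_sys_resop 0 (@resop_vS (Sk n m.+1)) Hk.
by rewrite /dv /Dh /thr /=; lra.
Qed.

Lemma diff_sys_db m : diff_sys (adm (thr m)) (fun i => - gam i) (db m).
Proof.
move=> k Hk; have := diff_sys_resop 1 (@resop_bS (Sk n m.+1)) Hk.
by rewrite /db /gam /Dd /dd /adm /thr /=; lra.
Qed.

Lemma diff_sys_dC m v : diff_sys (adm (thr m)) (forcing v) (dC m v).
Proof.
move=> k Hk; have E1 := diff_sys_dv m Hk; have E2 := diff_sys_db m Hk.
by rewrite /forcing -E1 -[gam _]opprK -E2 /dC; ring.
Qed.

(* Pivots and right-hand sides of the forward elimination of [diff_sys] in the states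
   below the threshold, where all admission rates equal [lam]. *)
Fixpoint pivot i :=
  if i is i'.+1 then alpha + lam i' + mu i - mu0 mu i' * lam i' / pivot i' else 1.

Fixpoint sweep (s : nat -> R) i :=
  if i is i'.+1 then (s i + mu0 mu i' * sweep s i') / pivot i else 0.

Lemma alpha_mu_gt0 i : (0 < i <= n)%N -> 0 < alpha + mu i.
Proof. by move=> Hi; have := mu_gt0 Hi; have := alpha_gt0; lra. Qed.

Lemma mu0_0 : mu0 mu 0 = 0.
Proof. by []. Qed.

Lemma sweepS s i : sweep s i.+1 = (s i.+1 + mu0 mu i * sweep s i) / pivot i.+1.
Proof. by []. Qed.

Lemma pivotS i : pivot i.+1 = alpha + lam i + mu i.+1 - mu0 mu i * lam i / pivot i.
Proof. by []. Qed.

Lemma mu0S i : mu0 mu i.+1 = mu i.+1.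
Proof. by []. Qed.

Lemma pivot_ge i : (0 < i <= n)%N -> alpha + mu i <= pivot i.
Proof.
elim: i => [//|i IH] /andP[_ Hi]; rewrite pivotS.
have lam_i := lam_gt0 (ltnW Hi); have a0 := alpha_gt0.
case: i IH Hi lam_i => [|i] IH Hi lam_i; first by rewrite mu0_0 !mul0r; lra.
have mu_i : 0 < mu i.+1 by apply: mu_gt0; lia.
have K_ge := IH (ltac:(lia)).
have : mu i.+1 * lam i.+1 / pivot i.+1 <= lam i.+1 by rewrite ler_pdivrMr; nra.
by rewrite mu0S; lra.
Qed.

Lemma pivot_gt0 i : (0 < i <= n)%N -> 0 < pivot i.
Proof. by move=> Hi; have := pivot_ge Hi; have := alpha_mu_gt0 Hi; lra. Qed.

Lemma pivot_neq0 i : (i <= n)%N -> pivot i != 0.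
Proof. by case: i => [|i] Hi; rewrite ?oner_eq0 // gt_eqF // pivot_gt0. Qed.

Lemma sweep_rec s i : (i < n)%N -> pivot i.+1 * sweep s i.+1 = s i.+1 + mu0 mu i * sweep s i.
Proof. by move=> Hi; rewrite sweepS mulrC divfK // pivot_neq0. Qed.

Lemma sweepN s i : sweep (fun k => - s k) i = - sweep s i.
Proof. by elim: i => [|i IH]; rewrite ?sweepS ?IH /=; ring. Qed.

Lemma sweep_lin s t (c : R) i :
  sweep (fun k => s k - c * t k) i = sweep s i - c * sweep t i.
Proof. by elim: i => [|i IH]; rewrite ?sweepS ?IH /=; ring. Qed.

Section ThresholdSystem.
Variables (m : nat) (a s D : nat -> R).
Hypothesis a_lt : forall i, (i < m)%N -> a i = lam i.
Hypothesis a_ge : forall i, (m <= i <= n)%N -> a i = 0.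
Hypothesis m_le : (m <= n)%N.
Hypothesis sysD : diff_sys a s D.

Lemma D_below i : (0 < i <= m)%N -> D i = sweep s i + a i / pivot i * D i.+1.
Proof.
have step j : (j < m)%N -> mu0 mu j * D j = mu0 mu j * (sweep s j + lam j / pivot j * D j.+1) ->
    D j.+1 = sweep s j.+1 + a j.+1 / pivot j.+1 * D j.+2.
  move=> jm low; have jn : (j < n)%N by lia.
  have := sysD jn; rewrite a_lt // mu0S => Hs.
  have Kj := pivot_neq0 (ltnW jn); have Kj1 := pivot_neq0 jn.
  have key : pivot j.+1 * D j.+1 = pivot j.+1 * sweep s j.+1 + a j.+1 * D j.+2.
    by rewrite sweep_rec // -Hs low pivotS; field.
  by apply: (mulfI Kj1); rewrite key; field.
case/andP; case: i => // i _; elim: i => [|i IH] lt_im.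
  by apply: step => //; rewrite mu0_0 !mul0r.
by apply: step => //; rewrite IH ?a_lt //; lia.
Qed.

Lemma D_at_thr : (0 < m)%N -> D m = sweep s m.
Proof.
move=> m_gt0; rewrite D_below; last by rewrite m_gt0 leqnn.
by rewrite a_ge ?leqnn ?m_le // mul0r mul0r addr0.
Qed.

Lemma D_above k : (m <= k < n)%N ->
  (alpha + mu k.+1) * D k.+1 = s k.+1 + mu0 mu k * D k.
Proof.
case/andP=> mk kn; have := sysD kn.
have ak : a k = 0 by apply: a_ge; lia.
have ak1 : a k.+1 = 0 by apply: a_ge; lia.
by rewrite ak ak1 mu0S; lra.
Qed.

Lemma mu0_D_at_thr : mu0 mu m * D m = mu0 mu m * sweep s m.
Proof. by case: (posnP m) => [->|m_gt0]; rewrite ?D_at_thr // mu0_0 !mul0r. Qed.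

Lemma D_first_above : (m < n)%N -> (alpha + mu m.+1) * D m.+1 = pivot m.+1 * sweep s m.+1.
Proof. by move=> mn; rewrite D_above ?leqnn // mu0_D_at_thr sweep_rec. Qed.

Lemma D_lt0_below : (forall i, (0 < i <= m)%N -> sweep s i < 0) ->
  forall i, (0 < i <= m)%N -> D i < 0.
Proof.
move=> e_lt0.
suff down t : (t < m)%N -> D (m - t) < 0.
  by move=> i /andP[i_gt0 im]; have := down (m - i)%N; rewrite subKn //; apply; lia.
elim: t => [|t IH] tm; first by rewrite subn0 D_at_thr ?e_lt0 //; lia.
have i_pos : (0 < m - t.+1 <= m)%N by lia.
rewrite D_below // a_lt; last lia.
have -> : (m - t.+1).+1 = (m - t)%N by lia.
have := IH (ltnW tm); have := e_lt0 _ i_pos.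
have : 0 < lam (m - t.+1) / pivot (m - t.+1).
  by apply: divr_gt0; [apply: lam_gt0 | apply: pivot_gt0]; lia.
nra.
Qed.

Lemma D_lt0_above : (forall i, (m < i <= n)%N -> s i < 0) -> mu0 mu m * D m <= 0 ->
  forall i, (m < i <= n)%N -> D i < 0.
Proof.
move=> s_lt0 base; elim=> [//|i IH] /andP[mi iN].
have low : mu0 mu i * D i <= 0.
  case: (eqVneq i m) => [-> //|nim].
  by apply: mulr_ge0_le0; [apply: mu0_ge0 | apply/ltW/IH]; lia.
have : (alpha + mu i.+1) * D i.+1 < 0.
  by rewrite D_above; [have := s_lt0 i.+1 (ltac:(lia)); lra | lia].
by rewrite pmulr_rlt0 // alpha_mu_gt0 //; lia.
Qed.

Lemma D_ge0_above : (forall i, (m.+1 < i <= n)%N -> 0 <= s i) -> 0 <= D m.+1 ->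
  forall i, (m < i <= n)%N -> 0 <= D i.
Proof.
move=> s_ge0 base; elim=> [//|i IH] /andP[mi iN].
case: (eqVneq i m) => [-> //|nim].
have low : 0 <= mu0 mu i * D i by apply: mulr_ge0; [apply: mu0_ge0 | apply: IH]; lia.
have : 0 <= (alpha + mu i.+1) * D i.+1.
  by rewrite D_above; [have := s_ge0 i.+1 (ltac:(lia)); lra | lia].
by rewrite pmulr_rge0 // alpha_mu_gt0 //; lia.
Qed.

Lemma D_le_sweep_above J : (J <= n)%N -> (forall i, (m < i <= J)%N -> sweep s i <= 0) ->
  forall i, (m < i <= J)%N -> D i <= sweep s i.
Proof.
move=> JN e_le0; elim=> [//|i IH] /andP[mi iJ].
have e1 := e_le0 i.+1 (ltac:(lia)).
have K_ge := @pivot_ge i.+1 (ltac:(lia)).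
have low : mu0 mu i * D i <= mu0 mu i * sweep s i.
  case: (eqVneq i m) => [->|nim]; first by rewrite mu0_D_at_thr.
  by apply: ler_wpM2l; [apply: mu0_ge0 | apply: IH]; lia.
have : (alpha + mu i.+1) * D i.+1 <= pivot i.+1 * sweep s i.+1.
  by rewrite D_above ?sweep_rec; [lra | lia | lia].
have : pivot i.+1 * sweep s i.+1 <= (alpha + mu i.+1) * sweep s i.+1 by nra.
have := @alpha_mu_gt0 i.+1 (ltac:(lia)); nra.
Qed.

End ThresholdSystem.

Hypothesis Dd_mono : forall i, (1 <= i <= n - 1)%N -> 0 <= Dd lam mu i.+1 <= Dd lam mu i.
Hypothesis Dd1_gt0 : 0 < Dd lam mu 1.
Hypothesis Dh_mono : forall i, (1 <= i <= n - 1)%N -> 0 <= Dh h i <= Dh h i.+1.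

Local Notation nu := (nuidx n lam mu h alpha).

Lemma gam_gt0 i : (0 < i <= n)%N -> 0 < gam i.
Proof.
rewrite /gam; have := alpha_gt0; case: i => [//|[|i]] a0 Hi; first by have := Dd1_gt0; lra.
by have /andP[+ _] := @Dd_mono i.+1 (ltac:(lia)); lra.
Qed.

Lemma gam_le i : (0 < i <= n - 1)%N -> gam i.+1 <= gam i.
Proof. by move=> /Dd_mono /andP[_]; rewrite /gam; lra. Qed.

Lemma sweep_gam_gt0 i : (0 < i <= n)%N -> 0 < sweep gam i.
Proof.
elim: i => [//|i IH] Hi; rewrite sweepS; apply: divr_gt0; last exact: pivot_gt0.
have : 0 <= mu0 mu i * sweep gam i.
  case: (posnP i) => [->|i_gt0]; first by rewrite mulr0.
  by apply: mulr_ge0; [apply: mu0_ge0 | apply/ltW/IH]; lia.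
by have := gam_gt0 Hi; lra.
Qed.

Lemma db_at_thr m : (0 < m <= n)%N -> db m m = - sweep gam m.
Proof.
case/andP=> m_gt0 mn; rewrite -sweepN.
exact: (D_at_thr (adm_thr_lt mn) (@adm_thr_ge m) mn (diff_sys_db m)).
Qed.

Lemma wS_db m i : wS n lam mu alpha (Sk n m.+1) i = - lam i * db m i.+1.
Proof. by rewrite /wS /db /=; ring. Qed.

Lemma wS_rho j : (j.+1 < n)%N ->
  wS n lam mu alpha (Sk n j.+2) j / rho lam mu j = mu j.+1 * sweep gam j.+1.
Proof.
move=> jn; rewrite wS_db db_at_thr; last lia.
have l0 : lam j != 0 by rewrite gt_eqF // lam_gt0 //; lia.
have m0 : mu j.+1 != 0 by rewrite gt_eqF // mu_gt0 //; lia.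
by rewrite /rho; field; rewrite l0 m0.
Qed.

Lemma nuS j : nu j.+1 =
  nu j + forcing (nu j) j.+2 / (gam j.+2 + wS n lam mu alpha (Sk n j.+2) j / rho lam mu j).
Proof. reflexivity. Qed.

Lemma nu0 : nu 0 = Dh h 1 / gam 1.
Proof. reflexivity. Qed.

(* The recursion defining [nuidx] is exactly this identity. *)
Lemma sweep_Dh i : (0 < i <= n)%N -> sweep (Dh h) i = sweep gam i * nu i.-1.
Proof.
elim: i => [//|[|i] IH] Hi.
  have g0 : gam 1 != 0 by rewrite gt_eqF // gam_gt0.
  have K0 : pivot 1 != 0 by rewrite pivot_neq0.
  by rewrite !sweepS mu0_0 !mul0r !addr0 nu0; field; rewrite g0 K0.
have K0 : pivot i.+2 != 0 by rewrite pivot_neq0.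
have N0 : gam i.+2 + mu i.+1 * sweep gam i.+1 != 0.
  rewrite gt_eqF //; have := gam_gt0 Hi; have := @sweep_gam_gt0 i.+1 (ltac:(lia)).
  by have := @mu_gt0 i.+1 (ltac:(lia)); nra.
rewrite sweepS (sweepS gam) IH; last lia.
by rewrite nuS wS_rho; [rewrite mu0S /forcing; field; rewrite K0 N0 | lia].
Qed.

Lemma sweep_forcing v i : (0 < i <= n)%N -> sweep (forcing v) i = sweep gam i * (nu i.-1 - v).
Proof. by move=> Hi; rewrite sweep_lin sweep_Dh //; ring. Qed.

Lemma forcing_up v i : (0 < i <= n - 1)%N -> 0 <= forcing v i -> 0 <= forcing v i.+1.
Proof.
move=> Hi; have /andP[Dh_ge0 Dh_le] := Dh_mono Hi; have g_le := gam_le Hi.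
have g_gt0 := @gam_gt0 i.+1 (ltac:(lia)).
by rewrite /forcing => f_ge0; case: (lerP 0 v) => v0; nra.
Qed.

Lemma forcing_ge0_from v i : (0 < i)%N -> 0 <= forcing v i ->
  forall k, (i <= k <= n)%N -> 0 <= forcing v k.
Proof.
move=> i_gt0 f_ge0; elim=> [|k IH] /andP[ik kn]; first lia.
case: (eqVneq i k.+1) => [<- //|nik].
by apply: forcing_up; [lia | apply: IH; lia].
Qed.

Lemma forcing_nu j : (j < n)%N ->
  forcing (nu j) j.+1 = mu0 mu j * sweep gam j * (nu j - nu j.-1).
Proof.
move=> jn; have := sweep_rec (forcing (nu j)) jn.
rewrite (@sweep_forcing (nu j) j.+1) ?subrr ?mulr0 //=.
case: (posnP j) => [->|j_gt0]; first by rewrite mu0_0 !mul0r; lra.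
by rewrite sweep_forcing; [lra | lia].
Qed.

Lemma nu_le_succ j : (j.+1 < n)%N -> 0 <= forcing (nu j) j.+1 -> nu j <= nu j.+1.
Proof.
move=> jn f_ge0; rewrite nuS wS_rho // lerDl.
have := @forcing_up (nu j) j.+1 (ltac:(lia)) f_ge0.
have := @gam_gt0 j.+2 (ltac:(lia)); have := @sweep_gam_gt0 j.+1 (ltac:(lia)).
have := @mu_gt0 j.+1 (ltac:(lia)) => *; apply: divr_ge0 => //; nra.
Qed.

Lemma nu_nondecr j : (j.+1 < n)%N -> nu j <= nu j.+1.
Proof.
elim: j => [|j IH] jn; apply: nu_le_succ; rewrite ?forcing_nu //; try lia.
  by rewrite mu0_0 !mul0r.
apply: mulr_ge0; last by rewrite subr_ge0 IH //; lia.
by apply: mulr_ge0; [apply: mu0_ge0 | apply/ltW/sweep_gam_gt0]; lia.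
Qed.

Lemma nu_mono i j : (i <= j)%N -> (j < n)%N -> nu i <= nu j.
Proof.
elim: j => [|j IH] ij jn; first by rewrite (_ : i = 0%N) //; lia.
case: (eqVneq i j.+1) => [-> //|nij].
by apply: le_trans (nu_nondecr jn); apply: IH; lia.
Qed.

Lemma dC_first_above m v : (m < n)%N ->
  (alpha + mu m.+1) * dC m v m.+1 = pivot m.+1 * (sweep gam m.+1 * (nu m - v)).
Proof.
move=> mn; rewrite -sweep_forcing; last lia.
exact: (D_first_above (adm_thr_lt (ltnW mn)) (@adm_thr_ge m) (ltnW mn) (diff_sys_dC m v)).
Qed.

Lemma dC_lt0_below m v : (0 < m <= n)%N -> nu m.-1 < v ->
  forall i, (0 < i <= m)%N -> dC m v i < 0.
Proof.
case/andP=> m_gt0 mn v_gt.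
apply: (D_lt0_below (adm_thr_lt mn) (@adm_thr_ge m) mn (diff_sys_dC m v)) => i Hi.
rewrite sweep_forcing; last lia.
have := @sweep_gam_gt0 i (ltac:(lia)); have := @nu_mono i.-1 m.-1 (ltac:(lia)) (ltac:(lia)).
nra.
Qed.

Lemma dC_ge0_above m v : (m < n)%N -> v <= nu m -> ((0 < m)%N -> nu m.-1 < v) ->
  forall i, (m < i <= n)%N -> 0 <= dC m v i.
Proof.
move=> mn v_le v_gt; have mn' := ltnW mn.
have am := @alpha_mu_gt0 m.+1 (ltac:(lia)).
have dC_first : 0 <= dC m v m.+1.
  rewrite -(pmulr_rge0 _ am) dC_first_above //.
  apply: mulr_ge0; first by apply/ltW/pivot_gt0; lia.
  by apply: mulr_ge0; [apply/ltW/sweep_gam_gt0; lia | rewrite subr_ge0].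
have f_ge0 : 0 <= forcing v m.+1.
  have := D_above (@adm_thr_ge m) mn' (diff_sys_dC m v) (k := m).
  rewrite leqnn mn => /(_ isT).
  have : mu0 mu m * dC m v m <= 0.
    case: (posnP m) => [->|m_gt0]; first by rewrite mu0_0 mul0r.
    apply: mulr_ge0_le0; first by apply: mu0_ge0.
    by apply/ltW/dC_lt0_below; rewrite ?v_gt ?m_gt0 ?leqnn //; lia.
  by have := mulr_ge0 (ltW am) dC_first; lra.
apply: (D_ge0_above (@adm_thr_ge m) mn' (diff_sys_dC m v)) => // i Hi.
by apply: (forcing_ge0_from _ f_ge0); lia.
Qed.

Lemma dC_nu_le0 m j : (m <= j < n)%N -> dC m (nu j) j.+1 <= 0.
Proof.
case/andP=> mj jn.
have e_le0 i : (m < i <= j.+1)%N -> sweep (forcing (nu j)) i <= 0.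
  move=> Hi; rewrite sweep_forcing; last lia.
  have := @sweep_gam_gt0 i (ltac:(lia)); have := @nu_mono i.-1 j (ltac:(lia)) jn.
  nra.
have mn : (m <= n)%N by lia.
have := D_le_sweep_above (adm_thr_lt mn) (@adm_thr_ge m) mn (diff_sys_dC m (nu j)) jn e_le0.
by move=> /(_ j.+1); rewrite sweep_forcing ?subrr ?mulr0; [apply; lia | lia].
Qed.

Lemma dC_nu_eq0 j : (j < n)%N -> dC j (nu j) j.+1 = 0.
Proof.
move=> jn; have am := @alpha_mu_gt0 j.+1 (ltac:(lia)).
by apply: (mulfI (lt0r_neq0 am)); rewrite mulr0 dC_first_above // subrr !mulr0.
Qed.

Lemma db_lt0 m i : (m <= n)%N -> (0 < i <= n)%N -> db m i < 0.
Proof.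
move=> mn Hi.
have below k : (0 < k <= m)%N -> db m k < 0.
  apply: (D_lt0_below (adm_thr_lt mn) (@adm_thr_ge m) mn (diff_sys_db m)) => l Hl.
  by rewrite sweepN oppr_lt0 sweep_gam_gt0 //; lia.
case: (leqP i m) => [im|mi]; first by apply: below; lia.
apply: (D_lt0_above (@adm_thr_ge m) mn (diff_sys_db m)); last lia.
  by move=> k Hk; rewrite oppr_lt0 gam_gt0 //; lia.
case: (posnP m) => [->|m_gt0]; first by rewrite mu0_0 mul0r.
by apply: mulr_ge0_le0; [apply: mu0_ge0 | apply/ltW/below; rewrite m_gt0 leqnn].
Qed.

Lemma resop_charge u v i : policy n u -> (i <= n)%N ->
  resop u (fun k => charge_obj n lam mu h alpha v u k) i = h i + v * (lam i * shut n u i).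
Proof. by move=> Pu Hi; rewrite /charge_obj resopDZ !resop_disc_measure. Qed.

Lemma dC_charge m v i : dC m v i.+1 =
  charge_obj n lam mu h alpha v (thr m) i.+1 - charge_obj n lam mu h alpha v (thr m) i - v.
Proof. by rewrite /dC /dv /db /charge_obj /vS /bS /thr /=; ring. Qed.

Lemma resop_charge_gap u m v k : policy n u -> (k <= n)%N ->
  resop u (fun i => charge_obj n lam mu h alpha v u i - charge_obj n lam mu h alpha v (thr m) i) k
  = (adm u k - adm (thr m) k) * dC m v k.+1.
Proof.
move=> Pu Hk; have Cu := resop_charge v Pu Hk.
have Ct := @resop_charge (thr m) v k (policy_Sactive _) Hk.
by move: Cu Ct; rewrite /resop dC_charge /adm; lra.
Qed.

Lemma thr_optimal m v : (m <= n)%N ->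
  (forall i, (0 < i <= m)%N -> dC m v i < 0) -> (forall i, (m < i <= n)%N -> 0 <= dC m v i) ->
  charge_optimal n lam mu h alpha v (thr m).
Proof.
move=> mn below above; split=> [|u Pu i Hi]; first exact: policy_Sactive.
rewrite -subr_ge0; move: i Hi; apply: (resop_ge0 Pu) => k Hk; rewrite resop_charge_gap //.
case: (ltnP k m) => [km|mk].
  rewrite adm_thr_lt //; have := adm_le_lam Pu Hk; have := below k.+1 (ltac:(lia)); nra.
rewrite adm_thr_ge ?mk // subr0.
case: (ltnP k n) => [kn|nk]; last by rewrite (_ : k = n) ?adm_n ?mul0r //; lia.
by apply: mulr_ge0; [exact: adm_ge0 | apply: above; lia].
Qed.

Lemma nu_threshold v : exists2 m, (m <= n)%N &
  (forall j, (j < n)%N -> (v <= nu j) = (m <= j)%N) /\ ((0 < m)%N -> nu m.-1 < v).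
Proof.
have [|m first_m min_m] := ex_minnP (P := fun j => (n <= j)%N || (v <= nu j)).
  by exists n; rewrite leqnn.
have mn : (m <= n)%N by apply: min_m; rewrite leqnn.
exists m => //; split=> [j jn|m_gt0].
  apply/idP/idP => [v_le|mj]; first by apply: min_m; rewrite v_le orbT.
  move: first_m; rewrite leqNgt (leq_ltn_trans mj jn) /= => v_le.
  exact: le_trans v_le (nu_mono mj jn).
rewrite ltNge; apply/negP => v_le.
by have := min_m m.-1; rewrite v_le orbT => /(_ isT); lia.
Qed.

Lemma thr_nu_optimal v : exists2 m, (m <= n)%N &
  (forall j, (j < n)%N -> (v <= nu j) = (m <= j)%N) /\ charge_optimal n lam mu h alpha v (thr m).
Proof.
have [m mn [thrE v_gt]] := nu_threshold v; exists m => //; split => //.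
apply: thr_optimal => // i Hi.
  by apply: dC_lt0_below; [lia | apply: v_gt; lia | lia].
by apply: dC_ge0_above => //; [lia | rewrite thrE ?leqnn //; lia].
Qed.

Lemma shut_optimalE v j : (j < n)%N -> shut_optimal n lam mu h alpha v j <-> v <= nu j.
Proof.
move=> jn; have [m mn [thrE opt]] := thr_nu_optimal v.
split=> [[u [[Pu u_opt] uj]]|v_le]; last first.
  by exists (thr m); split; rewrite // /thr /Sactive /Sk /= -thrE // v_le jn.
rewrite thrE // leqNgt; apply/negP => jm.
have gap0 k : (k <= n)%N ->
    charge_obj n lam mu h alpha v u k - charge_obj n lam mu h alpha v (thr m) k = 0.
  move=> Hk; apply/eqP; rewrite subr_eq0 eq_le.
  by rewrite (u_opt _ (policy_Sactive _) _ Hk) (opt.2 _ Pu _ Hk).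
have := resop_charge_gap m v Pu (ltnW jn).
rewrite /resop !gap0 ?(ltnW jn) //; last lia.
rewrite adm_thr_lt // /adm /shut leqNgt jn /= uj subrr mulr0 sub0r.
have v_gt : nu m.-1 < v by rewrite ltNge thrE; lia.
have := @dC_lt0_below m v (ltac:(lia)) v_gt j.+1 (ltac:(lia)).
by have := lam_gt0 (ltnW jn); nra.
Qed.

Lemma le_nu_Sk v : exists2 k, (1 <= k <= n.+1)%N &
  forall j, (j < n)%N -> (v <= nu j) = Sk n k j.
Proof.
have [m mn [thrE _]] := nu_threshold v; exists m.+1; first lia.
by move=> j jn; rewrite thrE // /Sk /= jn andbT.
Qed.

Lemma wS_gt0 k i : (1 <= k <= n.+1)%N -> (i < n)%N -> 0 < wS n lam mu alpha (Sk n k) i.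
Proof.
case: k => [//|m] /andP[_ mn] iN; rewrite wS_db.
by have := @db_lt0 m i.+1 mn (ltac:(lia)); have := lam_gt0 (ltnW iN); nra.
Qed.

Lemma ratio_thr m j : (m <= j < n)%N ->
  (vS n lam mu h alpha (setD1n (Sk n m.+1) j) j - vS n lam mu h alpha (Sk n m.+1) j) /
  (bS n lam mu alpha (Sk n m.+1) j - bS n lam mu alpha (setD1n (Sk n m.+1) j) j)
  = - dv m j.+1 / db m j.+1.
Proof.
move=> mjn; have /andP[_ jn] := mjn; set S := setD1n (Sk n m.+1) j.
have PS : policy n (Sactive R S) by apply: policy_Sactive.
set y := fun k => vS n lam mu h alpha S k - vS n lam mu h alpha (Sk n m.+1) k.
set z := fun k => bS n lam mu alpha S k - bS n lam mu alpha (Sk n m.+1) k.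
have s_lt0 : db m j.+1 < 0 by apply: db_lt0; lia.
have z_lt0 : z j < 0.
  apply: (resop_point_source PS (ltnW jn) (c := lam j * db m j.+1)).
    by rewrite pmulr_rlt0 // lam_gt0 // ltnW.
  by move=> i Hi; rewrite resop_bS_gap // adm_setD1n //; case: eqP => [->|]; rewrite ?mul0r.
have y_eq : y j = dv m j.+1 / db m j.+1 * z j.
  suff : y j + - (dv m j.+1 / db m j.+1) * z j = 0 by lra.
  apply: (resop_eq0 (y := fun k => y k + - (dv m j.+1 / db m j.+1) * z k) PS _ (ltnW jn)).
  move=> i Hi; rewrite resopDZ resop_vS_gap // resop_bS_gap // adm_setD1n //.
  case: eqP => [->|_]; last by ring.
  by rewrite -/(dv m j.+1) -/(db m j.+1); field; rewrite lt_eqF.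
rewrite -[X in _ / X]opprB -/(y j) -/(z j) y_eq.
by field; rewrite !lt_eqF.
Qed.

Lemma nu_ratio_max j : (j < n)%N ->
  let ratio k :=
    (vS n lam mu h alpha (setD1n (Sk n k) j) j - vS n lam mu h alpha (Sk n k) j)
    / (bS n lam mu alpha (Sk n k) j - bS n lam mu alpha (setD1n (Sk n k) j) j) in
  (exists2 k, ((1 <= k <= n)%N && Sk n k j) & nu j = ratio k)
  /\ (forall k, (1 <= k <= n)%N -> Sk n k j -> ratio k <= nu j).
Proof.
move=> jn ratio; split.
  exists j.+1; first by rewrite /Sk /= leqnn jn; lia.
  rewrite /ratio ratio_thr ?leqnn //.
  have := dC_nu_eq0 jn; have s_lt0 := @db_lt0 j j.+1 (ltnW jn) (ltac:(lia)).
  rewrite /dC => dC0; rewrite (_ : dv j j.+1 = - (nu j * db j j.+1)); last lra.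
  by field; rewrite lt_eqF.
case=> [//|m] _ /andP[mj _]; rewrite /ratio ratio_thr ?mj //.
have := @dC_nu_le0 m j (ltac:(lia)); have s_lt0 := @db_lt0 m j.+1 (ltac:(lia)) (ltac:(lia)).
by rewrite /dC ler_ndivrMr //; lra.
Qed.

End AdmissionControl.

Theorem theorem12 (R : realFieldType) (n : nat) (lam mu h : nat -> R) (alpha : R) :
  (1 <= n)%N ->
  0 < alpha ->
  (forall i, (i <= n)%N -> 0 < lam i) ->
  (forall i, (1 <= i <= n)%N -> 0 < mu i) ->
  (* (i) *)
  (forall i, (1 <= i <= n - 1)%N -> 0 <= Dd lam mu i.+1 <= Dd lam mu i) ->
  0 < Dd lam mu 1 ->
  (* (ii) *)
  (forall i, (1 <= i <= n - 1)%N -> 0 <= Dh h i <= Dh h i.+1) ->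
  [/\
    (* (a) positive marginal workloads on F, monotone indices *)
    (forall k i, (1 <= k <= n.+1)%N -> (i < n)%N ->
        0 < wS n lam mu alpha (Sk n k) i),
    (forall j, (j.+1 < n)%N -> nuidx n lam mu h alpha j <= nuidx n lam mu h alpha j.+1),
    (* (b) indexability relative to threshold policies *)
    (forall nu : R,
        (forall j, (j < n)%N ->
           (shut_optimal n lam mu h alpha nu j <-> nu <= nuidx n lam mu h alpha j))
        /\ exists2 k, (1 <= k <= n.+1)%N &
             forall j, (j < n)%N -> (nu <= nuidx n lam mu h alpha j) = Sk n k j)
  & (* (c) index as a maximum of marginal productivity rates *)
    (forall j, (j < n)%N ->
        let ratio k :=
          (vS n lam mu h alpha (setD1n (Sk n k) j) j - vS n lam mu h alpha (Sk n k) j)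
          / (bS n lam mu alpha (Sk n k) j - bS n lam mu alpha (setD1n (Sk n k) j) j) in
        (exists2 k, ((1 <= k <= n)%N && Sk n k j) & nuidx n lam mu h alpha j = ratio k)
        /\ (forall k, (1 <= k <= n)%N -> Sk n k j -> ratio k <= nuidx n lam mu h alpha j))
  ].
Proof.
move=> _ alpha_gt0 lam_gt0 mu_gt0 Dd_mono Dd1_gt0 Dh_mono; split.
- exact: wS_gt0.
- exact: nu_nondecr.
- by move=> v; split; [exact: shut_optimalE | exact: le_nu_Sk].
- exact: nu_ratio_max.
Qed.
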